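(* Let $E$ be a real affine space of dimension $n$, let $\mu\in\mathcal M(E)$ and let $K$ be a convex subset of $E$ satisfying $\mu(E\setminus K)<2^{-n}\mu(E)$. Then every Yao-Yao center of $\mu$ belongs to $K$.
   Context: $\vec E$ denotes the vector space associated with $E$. A partition of $E$ is a collection $\mathcal P$ of subsets of $E$ with $\bigcup\mathcal P=E$ such that the interiors of any two distinct elements of $\mathcal P$ are disjoint. Yao-Yao partitions and their centers are defined by induction on the dimension: if $E=\{x\}$ has dimension $0$, the Yao-Yao partition of $E$ is $\{\{x\}\}$, with center $x$. If $\dim E=n\ge 1$, $\mathcal P$ is a Yao-Yao partition of $E$ with center $x$ if there exist an affine hyperplane $F$ of $E$, a vector $v\in\vec E\setminus\vec F$ and two Yao-Yao partitions $\mathcal P_1,\mathcal P_{-1}$ of $F$ having the same center $x$, such that $\mathcal P=\{A+\mathbb R_- v : A\in\mathcal P_{-1}\}\cup\{A+\mathbb R_+ v: A\in\mathcal P_1\}$. $\mathcal M(E)$ is the set of finite non-negative Borel measures $\mu$ on $E$ such that $\mu(H)=0$ for every affine hyperplane $H$ of $E$. For $\mu\in\mathcal M(E)$, a Yao-Yao equipartition for $\mu$ is a Yao-Yao partition $\mathcal P$ of $E$ with $\mu(A)=2^{-n}\mu(E)$ for all $A\in\mathcal P$; a point $x\in E$ is a Yao-Yao center of $\mu$ if it is the center of some Yao-Yao equipartition for $\mu$. *)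

From HB Require Import structures.
From mathcomp Require Import all_boot all_order all_algebra.
From mathcomp Require Import all_classical all_reals all_analysis.
Set Implicit Arguments. Unset Strict Implicit. Unset Printing Implicit Defensive.
Import Order.TTheory GRing.Theory Num.Theory numFieldNormedType.Exports.
Local Open Scope classical_set_scope.
Local Open Scope ring_scope.

Section YaoYao.
Variables (R : realType) (n : nat).

(* The real affine space E of dimension n, modelled as R^n = 'rV[R]_n. *)
Notation E := 'rV[R]_n.

Definition aff (a : E) (W : {vspace E}) : set E := [set x | (x - a) \in W].

Definition aff_hyperplane_of (F G : set E) (v : E) : Prop :=
  exists (a : E) (V W : {vspace E}),
    [/\ F = aff a V, G = aff a W, (W <= V)%VS, (\dim W).+1 = \dim V
      & v \in V /\ v \notin W].

Definition add_neg_ray (A : set E) (v : E) : set E :=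
  [set y + t *: v | y in A & t in [set t : R | t <= 0]].
Definition add_pos_ray (A : set E) (v : E) : set E :=
  [set y + t *: v | y in A & t in [set t : R | 0 <= t]].

(* yao_yao F P x : P is a Yao-Yao partition of the affine subspace F of E,
   with center x (defined by induction on the dimension of F). *)
Inductive yao_yao : set E -> set (set E) -> E -> Prop :=
| yao_yao0 (x : E) : yao_yao [set x] [set [set x]] x
| yao_yaoS (F G : set E) (v : E) (P1 Pm1 : set (set E)) (x : E) :
    aff_hyperplane_of F G v ->
    yao_yao G P1 x -> yao_yao G Pm1 x ->
    yao_yao F ([set add_neg_ray A v | A in Pm1] `|`
               [set add_pos_ray A v | A in P1]) x.

Definition borelE : Type := g_sigma_algebraType (@open E).

Definition affine_hyperplane (H : set E) : Prop :=
  exists (a : E) (W : {vspace E}), (\dim W).+1 = n /\ H = aff a W.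

Definition in_M (mu : {measure set borelE -> \bar R}) : Prop :=
  (mu setT < +oo)%E /\ forall H : set E, affine_hyperplane H -> mu H = 0%E.

Definition yao_yao_equipartition (mu : {measure set borelE -> \bar R})
    (P : set (set E)) (x : E) : Prop :=
  yao_yao setT P x /\ forall A, P A -> mu A = ((2 ^- n : R)%:E * mu setT)%E.

Definition yao_yao_center (mu : {measure set borelE -> \bar R}) (x : E) : Prop :=
  exists P, yao_yao_equipartition mu P x.

End YaoYao.

(* If x is not in K, some cell of every Yao-Yao partition with center x
   misses K.  At an inductive step with direction v, x lies outside
   K + R_- v or outside K + R_+ v, since otherwise x is a convex combination
   of two points of K.  In the first case the induction hypothesis, applied
   in the hyperplane to the convex set K + R_- v, gives a cell A of P_1
   missing it, and then A + R_+ v misses K; the second case is symmetric.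
   Cells are closed, hence Borel, so that cell A satisfies
   mu(A) <= mu(E \ K) < 2^-n mu(E) = mu(A). *)

From HB Require Import structures.
From mathcomp Require Import all_boot all_order all_algebra.
From mathcomp Require Import all_classical all_reals all_analysis.
From mathcomp Require Import ring.
Import Order.TTheory GRing.Theory Num.Theory numFieldNormedType.Exports.
Local Open Scope classical_set_scope.
Local Open Scope ring_scope.
Set Implicit Arguments.
Unset Strict Implicit.
Unset Printing Implicit Defensive.

Definition convex_comb_closed (R : numDomainType) (V : lmodType R)
    (K : set V) :=
  forall a b (t : R), 0 <= t <= 1 -> K a -> K b -> K (t *: a + (1 - t) *: b).

Lemma convex_set_comb_closed (R : numDomainType) (V : lmodType R) (K : set V) :
  convex_set (K : set (convex_lmodType V)) -> convex_comb_closed K.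
Proof.
move=> cK a b t /andP[t0 t1] Ka Kb.
by have := cK a b (Itv01 t0 t1); rewrite !inE; apply.
Qed.

Lemma convex_comb_add_scale (R : pzRingType) (V : lmodType R) (a b v : V)
    (s t l : R) :
  l *: (a + s *: v) + (1 - l) *: (b + t *: v) =
  (l *: a + (1 - l) *: b) + (l * s + (1 - l) * t) *: v.
Proof. by rewrite !scalerDr !scalerA addrACA -scalerDl. Qed.

Lemma continuous_scalar_rV (R : realType) (n : nat)
    (phi : {scalar 'rV[R]_n}) :
  continuous phi.
Proof.
have -> : phi = (fun y => \sum_(j < n) y 0 j * phi (delta_mx 0 j)) :> (_ -> _).
  apply/funext => y; rewrite {1}(row_sum_delta y) linear_sum.
  by apply: eq_bigr => j _; rewrite linearZ.
apply: continuous_big => [|j _ y]; first exact: add_continuous.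
exact: (cvgM (@coord_continuous R 1 n 0 j y) (cvg_cst _)).
Qed.

Section AddRay.
Variables (R : realType) (n : nat).
Notation E := 'rV[R]_n.
Implicit Types (A K : set E) (v x : E).

Lemma add_neg_rayN A v : add_neg_ray A (- v) = add_pos_ray A v.
Proof.
apply/seteqP; split=> _ [a Aa [t /= t0 <-]]; exists a => //; exists (- t);
  rewrite /= ?oppr_le0 ?oppr_ge0 ?scaleNr ?scalerN ?opprK //.
Qed.

Lemma add_pos_rayN A v : add_pos_ray A (- v) = add_neg_ray A v.
Proof. by rewrite -add_neg_rayN opprK. Qed.

Lemma convex_comb_closed_add_pos_ray K v :
  convex_comb_closed K -> convex_comb_closed (add_pos_ray K v).
Proof.
move=> cK _ _ l l01 [a Ka [s /= s0 <-]] [b Kb [t /= t0 <-]].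
rewrite convex_comb_add_scale; exists (l *: a + (1 - l) *: b); first exact: cK.
case/andP: l01 => l0 l1.
exists (l * s + (1 - l) * t) => //=.
by rewrite addr_ge0 // mulr_ge0 // subr_ge0.
Qed.

Lemma convex_comb_closed_add_neg_ray K v :
  convex_comb_closed K -> convex_comb_closed (add_neg_ray K v).
Proof. by rewrite -add_pos_rayN; exact: convex_comb_closed_add_pos_ray. Qed.

Lemma notin_add_ray K v x : convex_comb_closed K -> ~ K x ->
  ~ add_neg_ray K v x \/ ~ add_pos_ray K v x.
Proof.
move=> cK Kx; apply/not_andP => -[[a Ka [s /= s0 xa]] [b Kb [t /= t0 xb]]].
have [s_eq0|s_neq0] := eqVneq s 0.
  by apply: Kx; rewrite -xa s_eq0 scale0r addr0.
have ts_gt0 : 0 < t - s.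
  by rewrite subr_gt0 (lt_le_trans _ t0) // lt_neqAle s_neq0.
(* [x] is the convex combination of [a = x - s v] and [b = x - t v] with
   weight [t / (t - s)] on [a]. *)
pose l := t / (t - s).
have l01 : 0 <= l <= 1.
  by rewrite divr_ge0 ?ler_pdivrMr ?(ltW ts_gt0) //= mul1r lerDl oppr_ge0.
have := cK _ _ _ l01 Ka Kb.
suff -> : l *: a + (1 - l) *: b = x by [].
have -> : a = x - s *: v by rewrite -xa addrK.
have -> : b = x - t *: v by rewrite -xb addrK.
rewrite -(scaleNr s v) -(scaleNr t v) convex_comb_add_scale.
rewrite -scalerDl subrKC scale1r.
suff -> : l * - s + (1 - l) * - t = 0 by rewrite scale0r addr0.
by rewrite /l; field; rewrite gt_eqF.
Qed.

Lemma add_pos_ray_subsetC A K v :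
  A `<=` ~` add_neg_ray K v -> add_pos_ray A v `<=` ~` K.
Proof.
move=> AK _ [a Aa [t /= t0 <-]] Kat; apply: (AK a Aa).
exists (a + t *: v) => //.
by exists (- t); rewrite /= ?oppr_le0 // scaleNr addrK.
Qed.

Lemma add_neg_ray_subsetC A K v :
  A `<=` ~` add_pos_ray K v -> add_neg_ray A v `<=` ~` K.
Proof. by rewrite -add_pos_rayN -add_neg_rayN; exact: add_pos_ray_subsetC. Qed.

Lemma yao_yao_cell_subsetC F P x K : yao_yao F P x ->
  convex_comb_closed K -> ~ K x -> exists2 A, P A & A `<=` ~` K.
Proof.
move=> yyP; elim: yyP K => {F P x} [x|F G v P1 Pm1 x _ _ IH1 _ IHm1] K.
  by move=> _ Kx; exists [set x] => // y ->.
move=> cK /(notin_add_ray v cK) [Kx|Kx].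
- have [A PA AK] := IH1 _ (convex_comb_closed_add_neg_ray cK) Kx.
  by exists (add_pos_ray A v); [right; exists A | exact: add_pos_ray_subsetC].
- have [A PA AK] := IHm1 _ (convex_comb_closed_add_pos_ray cK) Kx.
  by exists (add_neg_ray A v); [left; exists A | exact: add_neg_ray_subsetC].
Qed.
End AddRay.

Section ClosedCells.
Variables (R : realType) (n : nat).
Notation E := 'rV[R]_n.
Implicit Types (A : set E) (v x : E).

Lemma closed_add_pos_ray (phi : {scalar E}) (c : R) A v :
  continuous phi -> phi v != 0 -> (forall a, A a -> phi a = c) ->
  closed A -> closed (add_pos_ray A v).
Proof.
move=> phi_cont phiv_neq0 phiA clA.
pose psi y := (phi y - c) / phi v.
pose g y := y - psi y *: v.
(* [y = g y + psi y *: v], and on a ray [a + t *: v] from [a] in [A] the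
   maps [g] and [psi] recover [a] and [t]. *)
have psi_cont : continuous psi.
  by move=> y; exact: (cvgM (cvgB (phi_cont y) (cvg_cst c)) (cvg_cst _)).
have g_cont : continuous g.
  by move=> y; exact: (cvgB cvg_id (cvgZ (psi_cont y) (cvg_cst v))).
have psi_ray a t : A a -> psi (a + t *: v) = t.
  by move=> Aa; rewrite /psi linearD linearZ /= phiA // addrC addKr mulfK.
have -> : add_pos_ray A v = psi @^-1` [set r | 0 <= r] `&` g @^-1` A.
  apply/seteqP; split.
    by move=> _ [a Aa [t /= t0 <-]]; rewrite /= /g psi_ray // addrK.
  move=> y [/= psi_ge0 Agy]; exists (g y) => //; exists (psi y) => //.
  by rewrite /g subrK.
apply: closedI.
  by apply: preimage_closed => [y _|]; [exact: psi_cont|exact: closed_ge].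
by apply: preimage_closed => // y _; exact: g_cont.
Qed.

Lemma closed_add_neg_ray (phi : {scalar E}) (c : R) A v :
  continuous phi -> phi v != 0 -> (forall a, A a -> phi a = c) ->
  closed A -> closed (add_neg_ray A v).
Proof.
move=> phi_cont phiv_neq0 phiA; rewrite -add_pos_rayN.
by apply: closed_add_pos_ray phiA => //; rewrite linearN oppr_eq0.
Qed.

Lemma exists_scalar_notin (W : {vspace E}) v : v \notin W ->
  exists2 phi : {scalar E}, phi v = 1 & forall w, w \in W -> phi w = 0.
Proof.
move=> vW; pose Y := [tuple of v :: vbasis W].
have freeY : free Y.
  rewrite /= free_cons (span_basis (vbasisP W)) vW.
  exact: basis_free (vbasisP W).
exists (coord Y ord0); first exact: (coord_free ord0 ord0 freeY).
move=> w wW; rewrite (coord_vbasis wW) linear_sum big1 // => i _.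
by rewrite linearZ /= (coord_free (lift ord0 i) ord0 freeY) mulr0.
Qed.

Lemma closed_measurable_borelE A :
  closed A -> measurable (A : set (borelE R n)).
Proof.
move=> clA; rewrite -[A]setCK; apply: measurableC.
by apply: sub_sigma_algebra; rewrite openC.
Qed.

Lemma yao_yao_closed_cells F P x : yao_yao F P x ->
  F x /\ forall A, P A -> closed A /\ A `<=` F.
Proof.
elim=> {F P x} [x|F G v P1 Pm1 x hypFG _ [Gx IH1] _ [_ IHm1]].
  split=> // A ->; split=> //.
  exact: (accessible_closed_set1 (hausdorff_accessible (@norm_hausdorff _ _))).
have [a [V [W [FE GE WV _ [vV vW]]]]] := hypFG; subst F G.
have [phi phiv phiW] := exists_scalar_notin vW.
have phi_aff y : aff a W y -> phi y = phi a.
  by move=> /phiW /eqP; rewrite linearB subr_eq0 => /eqP.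
have ray_sub y t : aff a W y -> aff a V (y + t *: v).
  by move=> /(subvP WV) yaV; rewrite /aff /= addrAC memvD // memvZ.
have phi_cont : continuous phi by exact: continuous_scalar_rV.
split; first exact: (subvP WV).
move=> _ [[A PA <-]|[A PA <-]].
- have [clA AG] := IHm1 A PA; split.
    apply: (closed_add_neg_ray (c := phi a) phi_cont) clA.
      by rewrite phiv oner_eq0.
    by move=> y /AG /phi_aff.
  by move=> _ [y Ay [t _ <-]]; apply/ray_sub/AG.
- have [clA AG] := IH1 A PA; split.
    apply: (closed_add_pos_ray (c := phi a) phi_cont) clA.
      by rewrite phiv oner_eq0.
    by move=> y /AG /phi_aff.
  by move=> _ [y Ay [t _ <-]]; apply/ray_sub/AG.
Qed.
End ClosedCells.

Theorem proposition5 (R : realType) (n : nat)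
    (mu : {measure set (borelE R n) -> \bar R}) (K : set 'rV[R]_n) :
  in_M mu ->
  convex_set (K : set (convex_lmodType 'rV[R]_n)) ->
  measurable (K : set (borelE R n)) ->
  (mu (~` K) < (2 ^- n : R)%:E * mu setT)%E ->
  forall x : 'rV[R]_n, yao_yao_center mu x -> K x.
Proof.
move=> _ cK mK muK x [P [yyP muP]]; apply: contrapT => Kx.
have [A PA AK] := yao_yao_cell_subsetC yyP (convex_set_comb_closed cK) Kx.
have [clA _] := (yao_yao_closed_cells yyP).2 A PA.
have : (mu A <= mu (~` K))%E.
  apply: le_measure => //; rewrite inE.
  - exact: closed_measurable_borelE.
  - exact: measurableC.
by rewrite muP // leNgt muK.
Qed.
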